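(* Let $n\ge2$. Under the diagonal top-down model, the probability that the generated fully heterochronous ranked tree shape with $n$ leaves has $\mathbf{F}$-matrix $F$ is $$P(F)=\frac{1}{C_{n-1}}\cdot\frac{2^{n-1}}{\prod_{j=1}^{2n-2}F_{j-1,j-1}},\qquad C_{n-1}=\frac1n\binom{2n-2}{n-1}.$$
   Context: A fully heterochronous ranked tree shape with $n$ leaves is a rooted full binary tree (every node has out-degree $0$ or $2$), without leaf labels, with $n$ leaves, together with a total ordering of all $2n-1$ nodes (leaves included) such that nodes appear in increasing order along every path from the root to a leaf; the position of a node in this order, numbered $0,\dots,2n-2$, is its rank. Its $\mathbf{F}$-matrix is the $(2n-2)\times(2n-2)$ lower triangular matrix $F$, indices from $0$ to $2n-3$, where for $0\le j\le i$ the entry $F_{i,j}$ is the number of edges from a parent node $v$ to a child node $w$ with rank of $v$ at most $j$ and rank of $w$ larger than $i$ (entries with a negative index are taken to be $0$). The diagonal of such a matrix is a sequence of positive integers with $F_{0,0}=2$, $F_{k,k}=F_{k-1,k-1}\pm1$ and $F_{2n-3,2n-3}=1$; there are $C_{n-1}$ such sequences. Diagonal top-down model: first choose the diagonal $(F_{k,k})_{k=0}^{2n-3}$ uniformly at random among all such valid diagonals. Then build the remaining entries row by row: for $k=1,\dots,2n-3$, given rows $0,\dots,k-1$, choose $L\in\{0,\dots,k-1\}$ with probability $(F_{k-1,L}-F_{k-1,L-1})/F_{k-1,k-1}$ and set $F_{k,j}=F_{k-1,j}$ for $j<L$ and $F_{k,j}=F_{k-1,j}-1$ for $L\le j\le k-1$.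 Equivalently, the node of rank $k$ is attached as the child end of an edge chosen uniformly at random among the $F_{k-1,k-1}$ edges whose parent has rank at most $k-1$ and whose child has not yet been placed; it is internal if $F_{k,k}=F_{k-1,k-1}+1$ and a leaf otherwise (the node of rank $2n-2$ is a leaf on the unique remaining edge). *)

From mathcomp Require Import all_boot all_order all_algebra.
Set Implicit Arguments. Unset Strict Implicit. Unset Printing Implicit Defensive.
Import Order.TTheory GRing.Theory Num.Theory.

(* Nodes are identified with their ranks 0..2n-2.  A fully heterochronous
   ranked tree shape is given by its parent map on ranks: node v (1 <= v <= 2n-2)
   has parent [par v] with [par v < v] (rank increases along root-to-leaf paths);
   every node has 0 or 2 children; there are n leaves. *)

Definition nchildren (m : nat) (par : nat -> nat) (u : nat) : nat :=
  count (fun v => par v == u) (iota 1 m).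

Definition ranked_tree_shape (n : nat) (par : nat -> nat) : Prop :=
  [/\ (forall v, 1 <= v <= 2 * n - 2 -> par v < v)%N,
      (forall u, u <= 2 * n - 2 ->
          nchildren (2 * n - 2) par u = 0 \/ nchildren (2 * n - 2) par u = 2)%N
    & count (fun u => nchildren (2 * n - 2) par u == 0) (iota 0 (2 * n - 1)) = n].

Definition Fentry (m : nat) (par : nat -> nat) (i j : nat) : nat :=
  count (fun v => (par v <= j) && (i < v)) (iota 1 m).

Definition Fmatrix (n : nat) (par : nat -> nat) : 'M[nat]_(2 * n - 2) :=
  \matrix_(i < 2 * n - 2, j < 2 * n - 2)
     if (j <= i)%N then Fentry (2 * n - 2) par i j else 0%N.

Definition fext (m p : nat) (f : {ffun 'I_m -> 'I_p}) : nat -> nat :=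
  fun k => if (insub k : option 'I_m) is Some i then val (f i) else 0%N.

Definition is_diag (m : nat) (d : nat -> nat) : bool :=
  [&& d 0%N == 2%N, d m.-1 == 1%N,
      all (fun k => 0 < d k)%N (iota 0 m)
    & all (fun k => (d k == (d k.-1).+1) || ((d k).+1 == d k.-1)) (iota 1 m.-1)].

Definition next_row (r : nat -> nat) (k l dk : nat) : nat -> nat :=
  fun j => if (j < l)%N then r j
           else if (j < k)%N then (r j - 1)%N
           else if j == k then dk else 0%N.

Fixpoint rowg (d L : nat -> nat) (k : nat) : nat -> nat :=
  match k with
  | 0 => fun j => if j == 0%N then d 0%N else 0%N
  | k'.+1 => next_row (rowg d L k') k'.+1 (L k'.+1) (d k'.+1)
  end.

Definition genmat (m : nat) (d L : nat -> nat) : 'M[nat]_m :=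
  \matrix_(i < m, j < m) if (j <= i)%N then rowg d L i j else 0%N.

Local Open Scope ring_scope.

(* probability of choosing L at step k, given row r = row k-1:
   (F_{k-1,L} - F_{k-1,L-1}) / F_{k-1,k-1}, for L in {0,...,k-1} *)
Definition step_w (r : nat -> nat) (k l : nat) : rat :=
  if (l < k)%N then
    ((r l)%:R - (if l is l'.+1 then r l' else 0%N)%:R) / (r k.-1)%:R
  else 0.

(* Probability that the diagonal top-down model with n leaves outputs F:
   uniform diagonal D among valid diagonals, then choices L_1..L_{m-1}
   (L_0 is a dummy fixed to 0). *)
Definition Prob (n : nat) (F : 'M[nat]_(2 * n - 2)) : rat :=
  let m := (2 * n - 2)%N in
  let Diags := [set D : {ffun 'I_m -> 'I_m.+2} | is_diag m (fext D)] in
  \sum_(D in Diags)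
     (#|Diags|%:R)^-1 *
     \sum_(Lf : {ffun 'I_m -> 'I_m} | fext Lf 0%N == 0%N)
        (\prod_(1 <= k < m) step_w (rowg (fext D) (fext Lf) k.-1) k (fext Lf k))
        * (genmat m (fext D) (fext Lf) == F)%:R.

Definition catalan_pred (n : nat) : rat := (n%:R)^-1 * ('C(2 * n - 2, n - 1))%:R.

From mathcomp Require Import all_boot all_order all_algebra zify.
Import Order.TTheory GRing.Theory Num.Theory.
Set Implicit Arguments. Unset Strict Implicit. Unset Printing Implicit Defensive.

(* Given the tree, exactly one run of the model produces its F-matrix: the
   diagonal must be that of F, and the choice L at step k must be the parent p
   of node k, because row k arises from row k-1 by subtracting 1 exactly on
   the columns j >= L.  Along this run the numerator F_{k-1,p} - F_{k-1,p-1}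
   of step k counts the children of p of rank at least k; over all k these
   numerators multiply to the product of c! over the nodes with c children,
   i.e. 2^(n-1).  The valid diagonals are the positive walks of 2n-3 steps
   +-1 from 2 to 1, and the reflection principle counts C_{n-1} of them. *)

(* [ballot t a] counts the walks with [t] steps of [+1] or [-1] that start
   at [a], end at [1] and stay positive. *)
Fixpoint ballot (t a : nat) : nat :=
  match t with
  | 0 => a == 1
  | t'.+1 => if a is a'.+1 then ballot t' a'.+2 + ballot t' a' else 0
  end.

Lemma ballot0 t : ballot t 0 = 0.
Proof. by case: t. Qed.

Lemma ballotS t a : ballot t.+1 a.+1 = ballot t a.+2 + ballot t a.
Proof. by []. Qed.

Lemma ballot_far t a : t.+1 < a -> ballot t a = 0.
Proof. by elim: t a => [|t IH] [|[|a]] //= lt_ta; rewrite !IH //; lia. Qed.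

Lemma ballot_diag h : ballot h h.+1 = 1.
Proof. by elim: h => [|h IH] //=; rewrite ballot_far // IH. Qed.

Lemma bin_mid k : 'C(k.*2.+1, k.+1) = 'C(k.*2.+1, k).
Proof.
have le_k : k <= k.*2.+1 by lia.
by rewrite -(bin_sub le_k); congr (binomial _ _); lia.
Qed.

Lemma binS_pred n k : 'C(n.+1, k) = 'C(n, k) + (if k is k'.+1 then 'C(n, k') else 0).
Proof. by case: k => [|k]; rewrite ?bin0 ?binS. Qed.

Lemma ballot_reflection h k :
  ballot (h + 2 * k) h.+1 + (if k is k'.+1 then 'C(h + 2 * k, k') else 0)
  = 'C(h + 2 * k, k).
Proof.
elim: k h => [|k IHk] h; first by rewrite muln0 !addn0 ballot_diag bin0.
elim: h => [|h IHh].
  have := IHk 1; rewrite (_ : 1 + 2 * k = k.*2.+1); last lia.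
  rewrite (_ : 0 + 2 * k.+1 = k.*2.+2); last lia.
  rewrite [ballot k.*2.+2 _]ballotS ballot0 addn0 binS bin_mid (binS_pred k.*2.+1 k).
  set c := (if k is _.+1 then _ else _); lia.
have := IHk h.+2; move: IHh.
rewrite (_ : h + 2 * k.+1 = h.+2 + 2 * k); last lia.
rewrite (_ : h.+1 + 2 * k.+1 = (h.+2 + 2 * k).+1); last lia.
rewrite [ballot _.+1 _]ballotS !(binS_pred (h.+2 + 2 * k)).
set c := (if k is _.+1 then _ else _); lia.
Qed.

Lemma catalan_ballot k : 0 < k -> k.+1 * ballot (2 * k).-1 2 = 'C(2 * k, k).
Proof.
case: k => [|k] // _.
have := ballot_reflection 1 k; rewrite (_ : 1 + 2 * k = k.*2.+1); last lia.
rewrite (_ : (2 * k.+1).-1 = k.*2.+1); last lia.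
rewrite (_ : 2 * k.+1 = k.*2.+2); last lia.
rewrite binS bin_mid.
case: k => [|k]; first by [].
have := mul_bin_left k.+1.*2.+1 k.
rewrite (_ : k.+1.*2.+1 - k = k.+3); last lia.
nia.
Qed.

Definition consf (T : Type) m (x : T) (g : {ffun 'I_m -> T}) : {ffun 'I_m.+1 -> T} :=
  [ffun i => if unlift ord0 i is Some j then g j else x].

Lemma big_ffun_cons (R : Type) (idx : R) (op : Monoid.com_law idx) (T : finType) m
    (F : {ffun 'I_m.+1 -> T} -> R) :
  \big[op/idx]_(f : {ffun 'I_m.+1 -> T}) F f
  = \big[op/idx]_(x : T) \big[op/idx]_(g : {ffun 'I_m -> T}) F (consf x g).
Proof.
rewrite pair_big /= (reindex (fun p : T * {ffun 'I_m -> T} => consf p.1 p.2)) //=.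
exists (fun f : {ffun 'I_m.+1 -> T} => (f ord0, [ffun j => f (lift ord0 j)])).
  move=> [x g] _ /=; congr (_, _); first by rewrite ffunE unlift_none.
  by apply/ffunP => j; rewrite !ffunE liftK.
move=> f _; apply/ffunP => i; rewrite ffunE.
by case: (unliftP ord0 i) => [j ->|->]; rewrite ?ffunE.
Qed.

Lemma fext_val m p (f : {ffun 'I_m -> 'I_p}) (i : 'I_m) : fext f i = f i.
Proof. by rewrite /fext valK. Qed.

Lemma fext_out m p (f : {ffun 'I_m -> 'I_p}) k : m <= k -> fext f k = 0.
Proof. by move=> le_mk; rewrite /fext insubF // ltnNge le_mk. Qed.

Definition consn (x : nat) (d : nat -> nat) : nat -> nat :=
  fun k => if k is k'.+1 then d k' else x.

Lemma fext_consf p m (x : 'I_p) (g : {ffun 'I_m -> 'I_p}) k :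
  fext (consf x g) k = consn x (fext g) k.
Proof.
case: k => [|k] /=; first by rewrite (fext_val _ ord0) ffunE unlift_none.
case: (ltnP k m) => [lt_km|]; last by move=> le_mk; rewrite !fext_out.
by rewrite (fext_val _ (lift ord0 (Ordinal lt_km))) ffunE liftK (fext_val _ (Ordinal lt_km)).
Qed.

Lemma ffun_fext_eq m p (f g : {ffun 'I_m -> 'I_p}) :
  (forall k, k < m -> fext f k = fext g k) -> f = g.
Proof. by move=> eq_fg; apply/ffunP => i; apply/val_inj; rewrite /= -!fext_val eq_fg. Qed.

Definition is_diag_from (m a : nat) (d : nat -> nat) : bool :=
  [&& d 0 == a, d m.-1 == 1, all (fun k => 0 < d k) (iota 0 m)
    & all (fun k => (d k == (d k.-1).+1) || ((d k).+1 == d k.-1)) (iota 1 m.-1)].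

Lemma is_diagE m d : is_diag m d = is_diag_from m 2 d.
Proof. by []. Qed.

Lemma eq_is_diag_from m a d d' : d =1 d' -> is_diag_from m a d = is_diag_from m a d'.
Proof.
move=> eq_d; rewrite /is_diag_from !eq_d; congr [&& _, _, _ & _].
  by apply: eq_all => k; rewrite eq_d.
by apply: eq_all => k; rewrite !eq_d.
Qed.

Lemma all_iotaS (P : pred nat) i n : all P (iota i.+1 n) = all (fun k => P k.+1) (iota i n).
Proof. by elim: n i => //= n IH i; rewrite IH. Qed.

Lemma is_diag_from_cons m a x d :
  is_diag_from m.+2 a (consn x d) =
  [&& x == a, 0 < x, is_diag_from m.+1 (d 0) d & (d 0 == x.+1) || ((d 0).+1 == x)].
Proof.
rewrite /is_diag_from /= !all_iotaS eqxx.
by case: (x == a); case: (0 < x); case: (d m == 1); case: (0 < d 0); case: (_ || _);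
  rewrite /= ?andbT ?andbF.
Qed.

Lemma is_diag_from_head m a d : is_diag_from m a d = (d 0 == a) && is_diag_from m (d 0) d.
Proof. by rewrite /is_diag_from; case: (d 0 =P a) => [->|]; rewrite ?eqxx. Qed.

Definition ndiags (m p a : nat) : nat :=
  \sum_(D : {ffun 'I_m -> 'I_p}) is_diag_from m a (fext D).

Lemma ndiags_head m p a (lt_ap : a < p) :
  ndiags m.+1 p a = \sum_(g : {ffun 'I_m -> 'I_p}) is_diag_from m.+1 a (consn a (fext g)).
Proof.
rewrite /ndiags big_ffun_cons (bigD1 (Ordinal lt_ap)) //= [X in _ + X]big1 ?addn0 => [|x ne_xa].
  by apply: eq_bigr => g _; rewrite (eq_is_diag_from _ _ (fext_consf _ g)).
apply: big1 => g _; rewrite (eq_is_diag_from _ _ (fext_consf _ g)) is_diag_from_head /=.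
by case: eqP => // eq_xa; case/eqP: ne_xa; apply: val_inj.
Qed.

Lemma ndiags1 p a : a < p -> ndiags 1 p a = (a == 1).
Proof.
move=> lt_ap; rewrite ndiags_head // (eq_bigr (fun=> nat_of_bool (a == 1))).
  by rewrite sum_nat_const card_ffun !card_ord mul1n.
by move=> g _; rewrite /is_diag_from /= eqxx !andbT; case: eqP => // ->.
Qed.

Lemma ndiags0 m p : ndiags m.+1 p 0 = 0.
Proof. by apply: big1 => D _; rewrite /is_diag_from /=; case: eqP => // ->; rewrite !andbF. Qed.

Lemma ndiagsS m p a : a.+1 < p -> ndiags m.+2 p a.+1 = ndiags m.+1 p a.+2 + ndiags m.+1 p a.
Proof.
move=> lt_ap; rewrite ndiags_head // /ndiags -big_split /=; apply: eq_bigr => g _.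
rewrite is_diag_from_cons !eqxx /= eqSS.
rewrite [is_diag_from _ a.+2 _]is_diag_from_head [is_diag_from _ a _]is_diag_from_head.
case: is_diag_from; rewrite ?andbF //.
by case: (fext g 0 =P a.+2) => [->|_]; rewrite /= ?andbT // gtn_eqF // leqW.
Qed.

Lemma ndiags_ballot t p a : a + t < p -> ndiags t.+1 p a = ballot t a.
Proof.
elim: t a => [|t IH] [|a] lt_atp; rewrite ?ndiags0 ?ballot0 //.
  by rewrite ndiags1 //; lia.
by rewrite ndiagsS ?ballotS ?IH //; lia.
Qed.

Definition diagonals (m : nat) := [set D : {ffun 'I_m -> 'I_m.+2} | is_diag m (fext D)].

Lemma card_diagonals m : 0 < m -> #|diagonals m| = ballot m.-1 2.
Proof.
case: m => [|m] // _; rewrite -(@ndiags_ballot _ m.+3); last lia.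
by rewrite -sum1dep_card big_mkcond; apply: eq_bigr => D _; rewrite is_diagE; case: is_diag_from.
Qed.

Lemma count_leq_split (f : nat -> nat) j s :
  count (fun v => f v <= j) s = count (fun v => f v < j) s + count (fun v => f v == j) s.
Proof. by elim: s => //= v s ->; case: ltngtP; lia. Qed.

Lemma sum_count_eq (f : nat -> nat) N s : all (fun v => f v < N) s ->
  \sum_(u < N) count (fun v => f v == u) s = size s.
Proof.
elim: s => [|v s IH] /=; first by rewrite big1.
case/andP=> lt_vN /IH {}IH; rewrite big_split /= IH addnC -addn1; congr (_ + _).
rewrite (bigD1 (Ordinal lt_vN)) //= eqxx big1 // => u ne_uv.
by apply/eqP; rewrite eqb0; apply: contra ne_uv => /eqP eq_vu; apply/eqP/val_inj.
Qed.

Section FEntries.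

Variables (m : nat) (par : nat -> nat).

Definition children_above (i u : nat) : nat :=
  count (fun v => par v == u) (iota i.+1 (m - i)).

Lemma nchildrenE u : nchildren m par u = children_above 0 u.
Proof. by rewrite /children_above subn0. Qed.

Lemma children_aboveS i u : i < m ->
  children_above i u = (par i.+1 == u) + children_above i.+1 u.
Proof. by move=> lt_im; rewrite /children_above (_ : m - i = (m - i.+1).+1) //; lia. Qed.

Lemma Fentry_suffix i j : i <= m ->
  Fentry m par i j = count (fun v => par v <= j) (iota i.+1 (m - i)).
Proof.
move=> le_im; rewrite /Fentry -{1}(subnKC le_im) iotaD count_cat add1n.
rewrite (@eq_in_count _ _ pred0) => [|v]; last by rewrite mem_iota /=; lia.
rewrite count_pred0; apply: eq_in_count => v; rewrite mem_iota /=; lia.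
Qed.

Lemma Fentry_out i j : m <= i -> Fentry m par i j = 0.
Proof.
move=> le_mi; rewrite /Fentry (@eq_in_count _ _ pred0) ?count_pred0 // => v.
by rewrite mem_iota /=; lia.
Qed.

Lemma Fentry_le i j : Fentry m par i j <= m.
Proof. by rewrite /Fentry (leq_trans (count_size _ _)) // size_iota. Qed.

Lemma Fentry_step k j : k < m -> Fentry m par k j = (par k.+1 <= j) + Fentry m par k.+1 j.
Proof.
by move=> lt_km; rewrite !Fentry_suffix ?(ltnW lt_km) // (_ : m - k = (m - k.+1).+1) //; lia.
Qed.

Lemma Fentry_col i j : i <= m ->
  Fentry m par i j = (if j is j'.+1 then Fentry m par i j' else 0) + children_above i j.
Proof.
move=> le_im; case: j => [|j]; rewrite !Fentry_suffix // count_leq_split //.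
by rewrite (@eq_count _ _ pred0) ?count_pred0 // => v; rewrite ltn0.
Qed.

Lemma children_above_out i u : m <= i -> children_above i u = 0.
Proof. by move=> le_mi; rewrite /children_above (_ : m - i = 0) //; lia. Qed.

(* Each child [v] of [u] contributes the number of its siblings of rank at
   least [v]; these numbers run through [c, c-1, ..., 1] for [c] children. *)
Lemma prod_children_above N : (forall v, 1 <= v <= m -> par v < N) ->
  \prod_(i < m) children_above i (par i.+1) = \prod_(u < N) (children_above 0 u)`!.
Proof.
move=> par_lt_N; rewrite -(big_mkord xpredT (fun i => children_above i (par i.+1))).
suff prod_from t a : m - a = t ->
    \prod_(a <= i < m) children_above i (par i.+1) = \prod_(u < N) (children_above a u)`!.
  exact: prod_from.
elim: t a => [|t IH] a eq_t.
  by rewrite big_geq ?big1 // => [u _|]; rewrite ?children_above_out //; lia.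
have lt_am : a < m by lia.
have lt_pN : par a.+1 < N by apply: par_lt_N; lia.
rewrite big_ltn // IH; last lia.
rewrite (bigD1 (Ordinal lt_pN)) //= [in RHS](bigD1 (Ordinal lt_pN)) //=.
rewrite mulnA; congr (_ * _); first by rewrite children_aboveS // eqxx add1n factS.
apply: eq_bigr => u ne_up; rewrite (@children_aboveS a u) // (_ : (par a.+1 == u) = false) //.
by apply: contraNF ne_up => /eqP eq_pu; apply/eqP/val_inj.
Qed.

End FEntries.

Lemma rowg_diag d L k : L k <= k -> rowg d L k k = d k.
Proof. by case: k => [|k] /=; rewrite ?eqxx // /next_row ltnNge => ->; rewrite ltnn eqxx. Qed.

Lemma rowgS_lt d L k j : j <= k ->
  rowg d L k.+1 j = rowg d L k j - (L k.+1 <= j).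
Proof. by move=> le_jk; rewrite /= /next_row ltnS le_jk ltnNge; case: leqP; rewrite ?subn0. Qed.

Lemma step_w_neq0 r k l : step_w r k l != 0%R ->
  l < k /\ r l != (if l is l'.+1 then r l' else 0).
Proof.
rewrite /step_w; case: ifP => [lt_lk|]; last by rewrite eqxx.
by rewrite mulf_eq0 negb_or subr_eq0 eqr_nat => /andP[].
Qed.

Lemma tree_diag_bound m par (i : 'I_m) : Fentry m par i i < m.+2.
Proof. by rewrite ltnS leqW // Fentry_le. Qed.

Lemma tree_choice_bound (par : nat -> nat) m (i : 'I_m) : minn (par i) i < m.
Proof. exact: leq_ltn_trans (geq_minr _ _) (ltn_ord i). Qed.

Definition tree_diag m par : {ffun 'I_m -> 'I_m.+2} :=
  [ffun i => Ordinal (tree_diag_bound par i)].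

(* [minn _ i] only serves to land in ['I_m]: it is [par i] for [0 < i < m], and
   the dummy choice [0] at [i = 0]. *)
Definition tree_choice m par : {ffun 'I_m -> 'I_m} :=
  [ffun i => Ordinal (tree_choice_bound par i)].

Lemma fext_tree_diag m par : fext (tree_diag m par) =1 fun k => Fentry m par k k.
Proof.
move=> k; case: (ltnP k m) => [lt_km|le_mk]; last by rewrite fext_out ?Fentry_out.
by rewrite (fext_val _ (Ordinal lt_km)) ffunE.
Qed.

Lemma fext_tree_choice m par k : k < m -> fext (tree_choice m par) k = minn (par k) k.
Proof. by move=> lt_km; rewrite (fext_val _ (Ordinal lt_km)) ffunE. Qed.

Definition Fmx m par : 'M[nat]_m :=
  \matrix_(i < m, j < m) if j <= i then Fentry m par i j else 0.

Section RankedTree.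

Variables (m : nat) (par : nat -> nat).
Hypothesis par_lt : forall v, 1 <= v <= m -> par v < v.
Hypothesis binary : forall u, u <= m -> nchildren m par u = 0 \/ nchildren m par u = 2.

Lemma par_le k : k < m -> par k.+1 <= k.
Proof. by move=> lt_km; rewrite -ltnS par_lt //; lia. Qed.

Lemma Fentry_diag_gt0 k : k < m -> 0 < Fentry m par k k.
Proof. by move=> lt_km; rewrite Fentry_step // par_le. Qed.

Lemma Fentry_last : 0 < m -> Fentry m par m.-1 m.-1 = 1.
Proof.
move=> m_gt0; have lt_m1m : m.-1 < m by rewrite ltn_predL.
by rewrite Fentry_step ?par_le ?prednK ?Fentry_out.
Qed.

Lemma Fentry_diagS k : k.+1 < m ->
  (Fentry m par k.+1 k.+1).+1 = Fentry m par k k + children_above m par k.+1 k.+1.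
Proof.
move=> lt_km; rewrite Fentry_col 1?(Fentry_step _ _ (ltnW lt_km)) ?par_le; lia.
Qed.

Lemma children_above_self u : u <= m -> children_above m par u u = nchildren m par u.
Proof.
move=> le_um; rewrite nchildrenE /children_above subn0.
have -> : iota 1 m = iota 1 u ++ iota u.+1 (m - u) by rewrite -{1}(subnKC le_um) iotaD add1n.
rewrite count_cat (@eq_in_count _ _ pred0 (iota 1 u)) ?count_pred0 // => v.
rewrite mem_iota /= => lt_v.
by have := @par_lt v; case: (par v =P u) => // ->; lia.
Qed.

Lemma is_diag_Fentry : 0 < m -> is_diag m (fun k => Fentry m par k k).
Proof.
move=> m_gt0; apply/and4P; split.
- rewrite Fentry_col // -nchildrenE.
  have : nchildren m par 0 != 0.
    have par1 : par 1 = 0 by apply/eqP; rewrite -leqn0 par_le.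
    by rewrite /nchildren -(prednK m_gt0) /= par1.
  by case: (binary (leq0n m)) => ->.
- by rewrite Fentry_last.
- by apply/allP => k; rewrite mem_iota => /andP[_ lt_km]; apply: Fentry_diag_gt0.
- apply/allP => k; rewrite mem_iota => /andP[k_gt0 lt_km].
  case: k k_gt0 lt_km => [|k] // _ lt_km; have lt_k1m : k.+1 < m by lia.
  have := Fentry_diagS lt_k1m; rewrite children_above_self; last exact: ltnW.
  by case: (binary (ltnW lt_k1m)) => -> eqF; apply/orP; [right|left]; apply/eqP; rewrite /=; lia.
Qed.

Lemma fext_tree_choice_par k : 0 < k < m -> fext (tree_choice m par) k = par k.
Proof.
case/andP=> k_gt0 lt_km; rewrite fext_tree_choice //.
by apply/minn_idPl/ltnW/par_lt; rewrite k_gt0 ltnW.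
Qed.

Lemma rowg_tree i j : j <= i < m ->
  rowg (fext (tree_diag m par)) (fext (tree_choice m par)) i j = Fentry m par i j.
Proof.
elim: i j => [|i IH] j /andP[le_ji lt_im].
  by move: le_ji; rewrite leqn0 => /eqP->; rewrite rowg_diag ?fext_tree_diag // fext_tree_choice.
case: (ltngtP j i.+1) le_ji => // [lt_ji | ->] _.
  have lt_i1m := ltnW lt_im.
  rewrite rowgS_lt // IH; last by rewrite -ltnS lt_ji.
  by rewrite fext_tree_choice_par ?lt_im // (Fentry_step _ _ lt_i1m) addKn.
rewrite rowg_diag ?fext_tree_diag // fext_tree_choice_par ?lt_im //.
by apply/ltnW/par_lt; lia.
Qed.

Lemma genmat_tree : genmat m (fext (tree_diag m par)) (fext (tree_choice m par)) = Fmx m par.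
Proof.
by apply/matrixP => i j; rewrite !mxE; case: ifP => // le_ji; rewrite rowg_tree // le_ji ltn_ord.
Qed.

(* If row [k+1] is obtained from row [k] by the choice [l], then [l] is the parent of
   node [k+1]: on the columns between them, exactly one of the two would subtract [1]. *)
Lemma choice_eq_par d L k : k.+1 < m ->
  (forall j, j <= k -> rowg d L k j = Fentry m par k j) ->
  (forall j, j <= k -> rowg d L k.+1 j = Fentry m par k.+1 j) ->
  step_w (rowg d L k) k.+1 (L k.+1) != 0%R -> L k.+1 = par k.+1.
Proof.
move=> lt_k1m row_k row_k1 /step_w_neq0[lt_lk ne_prev].
have lt_km : k < m by exact: ltnW.
have row_step j : j <= k -> Fentry m par k j - (L k.+1 <= j) = Fentry m par k j - (par k.+1 <= j).
  by move=> le_jk; rewrite -[in LHS]row_k // -rowgS_lt // row_k1 // (Fentry_step _ _ lt_km) addKn.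
have F_l_gt0 : 0 < Fentry m par k (L k.+1).
  move: ne_prev; rewrite row_k // Fentry_col ?(ltnW lt_km) //.
  by case: (L k.+1) lt_lk => [|l] lt_lk; rewrite ?row_k //; lia.
have F_p_gt0 : 0 < Fentry m par k (par k.+1) by rewrite Fentry_step // leqnn.
case: (ltngtP (L k.+1) (par k.+1)) => // [lt_lp | lt_pl].
  by have := row_step _ lt_lk; rewrite leqnn leqNgt lt_lp; lia.
by have := row_step _ (par_le lt_km); rewrite leqnn leqNgt lt_pl; lia.
Qed.

Lemma generation_unique (D : {ffun 'I_m -> 'I_m.+2}) (Lf : {ffun 'I_m -> 'I_m}) :
  fext Lf 0 = 0 ->
  (\prod_(1 <= k < m) step_w (rowg (fext D) (fext Lf) k.-1) k (fext Lf k) != 0)%R ->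
  genmat m (fext D) (fext Lf) = Fmx m par ->
  D = tree_diag m par /\ Lf = tree_choice m par.
Proof.
move=> L0; rewrite prodf_seq_neq0 => /allP w_neq0 genF.
have row_F i j : j <= i < m -> rowg (fext D) (fext Lf) i j = Fentry m par i j.
  case/andP=> le_ji lt_im; have lt_jm := leq_ltn_trans le_ji lt_im.
  by have := congr1 (fun M : 'M_m => M (Ordinal lt_im) (Ordinal lt_jm)) genF; rewrite !mxE /= le_ji.
have L_le k : k < m -> fext Lf k <= k.
  case: k => [|k] lt_km; first by rewrite L0.
  have k_in : k.+1 \in index_iota 1 m by rewrite mem_index_iota.
  by have [/ltnW] := step_w_neq0 (w_neq0 _ k_in).
split; apply: ffun_fext_eq => k lt_km.
  by rewrite fext_tree_diag -(@rowg_diag _ (fext Lf)) ?L_le // row_F ?leqnn.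
rewrite fext_tree_choice //; case: k lt_km => [|k] lt_km; first by rewrite L0 minn0.
rewrite (minn_idPl (leqW (par_le (ltnW lt_km)))).
apply: (@choice_eq_par (fext D)) => // [j le_jk|j le_jk|].
- by rewrite row_F //; lia.
- by rewrite row_F //; lia.
- by apply: w_neq0; rewrite mem_index_iota.
Qed.

Lemma step_w_tree k : 0 < k < m ->
  step_w (rowg (fext (tree_diag m par)) (fext (tree_choice m par)) k.-1) k
         (fext (tree_choice m par) k)
  = ((children_above m par k.-1 (par k))%:R / (Fentry m par k.-1 k.-1)%:R)%R.
Proof.
case: k => [|k] // /andP[_ lt_km]; have lt_k0m : k < m by exact: ltnW.
rewrite fext_tree_choice_par ?lt_km // /step_w par_lt /=; last lia.
rewrite !rowg_tree ?leqnn ?par_le // (@Fentry_col _ _ k (par k.+1)) ?(ltnW lt_k0m) //.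
case: (par k.+1) (par_le lt_k0m) => [|p] le_pk; first by rewrite subr0.
by rewrite rowg_tree ?natrD ?addrKA; [rewrite addrC addKr | lia].
Qed.

Lemma prod_children_above_tree :
  \prod_(1 <= k < m) children_above m par k.-1 (par k) = 2 ^ m./2.
Proof.
have [->|m_gt0] := posnP m; first by rewrite big_geq.
have lt_m1m : m.-1 < m by rewrite ltn_predL.
have last1 : children_above m par m.-1 (par m) = 1.
  by rewrite children_aboveS // prednK // eqxx children_above_out.
have <- : \prod_(1 <= k < m.+1) children_above m par k.-1 (par k)
          = \prod_(1 <= k < m) children_above m par k.-1 (par k).
  by rewrite big_nat_recr //= last1 muln1.
rewrite big_add1 /= big_mkord (@prod_children_above _ _ m.+1); last first.
  by move=> v v_range; have := par_lt v_range; lia.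
have binary_ord (u : 'I_m.+1) : nchildren m par u = 0 \/ nchildren m par u = 2.
  exact: binary (ltn_ord u).
rewrite (eq_bigr (fun u : 'I_m.+1 => 2 ^ (nchildren m par u)./2)) => [|u _]; last first.
  by rewrite -nchildrenE; case: (binary_ord u) => ->.
rewrite -expn_sum; congr (2 ^ _).
have sum_m : \sum_(u < m.+1) nchildren m par u = m.
  rewrite /nchildren sum_count_eq ?size_iota //; apply/allP => v; rewrite mem_iota => v_in.
  by have := @par_lt v; lia.
rewrite -[X in _ = X./2]sum_m.
have -> : \sum_(u < m.+1) nchildren m par u = (\sum_(u < m.+1) (nchildren m par u)./2).*2.
  by rewrite -mul2n big_distrr; apply: eq_bigr => u _; case: (binary_ord u) => ->.
by rewrite doubleK.
Qed.

End RankedTree.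

Local Open Scope ring_scope.

Definition topdown_prob (m : nat) (F : 'M[nat]_m) : rat :=
  \sum_(D in diagonals m)
     (#|diagonals m|%:R)^-1 *
     \sum_(Lf : {ffun 'I_m -> 'I_m} | fext Lf 0%N == 0%N)
        (\prod_(1 <= k < m) step_w (rowg (fext D) (fext Lf) k.-1) k (fext Lf k))
        * (genmat m (fext D) (fext Lf) == F)%:R.

Lemma ProbE n F : @Prob n F = topdown_prob F.
Proof. by []. Qed.

Section TreeProbability.

Variables (m : nat) (par : nat -> nat).
Hypothesis par_lt : forall v, (1 <= v <= m)%N -> (par v < v)%N.
Hypothesis binary : forall u, (u <= m)%N -> nchildren m par u = 0%N \/ nchildren m par u = 2%N.

Lemma run_weight_eq0 D Lf : fext Lf 0 = 0%N ->
  (D != tree_diag m par) || (Lf != tree_choice m par) ->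
  (\prod_(1 <= k < m) step_w (rowg (fext D) (fext Lf) k.-1) k (fext Lf k))
    * (genmat m (fext D) (fext Lf) == Fmx m par)%:R = 0.
Proof.
move=> L0 ne_run; apply/eqP; rewrite mulf_eq0 pnatr_eq0 eqb0 orbC -implybE.
apply/implyP => /eqP genF; move: ne_run; apply: contraLR => w_neq0.
by have [-> ->] := generation_unique par_lt L0 w_neq0 genF; rewrite !eqxx.
Qed.

Lemma topdown_prob_tree : (0 < m)%N ->
  topdown_prob (Fmx m par) =
  (#|diagonals m|%:R)^-1 *
  ((\prod_(1 <= k < m) children_above m par k.-1 (par k))%:R /
    \prod_(1 <= k < m) (Fentry m par k.-1 k.-1)%:R).
Proof.
move=> m_gt0; rewrite /topdown_prob (bigD1 (tree_diag m par)) /=; last first.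
  by rewrite inE is_diagE (eq_is_diag_from _ _ (fext_tree_diag _ _)) -is_diagE is_diag_Fentry.
rewrite [X in _ + X]big1 ?addr0 => [|D /andP[_ ne_D]]; last first.
  by rewrite big1 ?mulr0 // => Lf /eqP L0; rewrite run_weight_eq0 ?ne_D.
congr (_ * _).
rewrite (bigD1 (tree_choice m par)) /=; last by rewrite fext_tree_choice.
rewrite [X in _ + X]big1 ?addr0 => [|Lf /andP[/eqP L0 ne_Lf]]; last first.
  by rewrite run_weight_eq0 ?ne_Lf ?orbT.
rewrite genmat_tree // eqxx mulr1 (eq_big_nat _ _ (fun k lt_k => step_w_tree par_lt lt_k)).
by rewrite big_split /= prodfV natr_prod.
Qed.

End TreeProbability.

Lemma catalan_predE n : (1 < n)%N -> catalan_pred n = (ballot (2 * n - 2).-1 2)%:R.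
Proof.
case: n => [|[|k]] // _; rewrite /catalan_pred (_ : (2 * k.+2 - 2 = 2 * k.+1)%N); last lia.
by rewrite subn1 /= -catalan_ballot // natrM mulKf // pnatr_eq0.
Qed.

Theorem proposition5 (n : nat) (par : nat -> nat) :
  (2 <= n)%N -> ranked_tree_shape n par ->
  Prob (Fmatrix n par) =
    (catalan_pred n)^-1 *
    ((2%:R ^+ (n - 1)) /
       \prod_(1 <= j < (2 * n - 2).+1)
          (Fentry (2 * n - 2) par (j - 1) (j - 1))%:R).
Proof.
move=> n_ge2 [par_lt binary _]; have m_gt0 : (0 < 2 * n - 2)%N by lia.
rewrite ProbE topdown_prob_tree // card_diagonals // -catalan_predE //.
rewrite prod_children_above_tree // natrX (_ : ((2 * n - 2)./2 = n - 1)%N); last lia.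
rewrite big_nat_recr //= (subn1 (2 * n - 2)) Fentry_last // mulr1.
by under [in RHS]eq_big_nat => j _ do rewrite subn1.
Qed.
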